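(* Let $\mathcal{H} = (\mathbb{C}^2)^{\otimes k}$ be the space of $k = O(1)$ qubits and let $H = J\bigotimes_{i=1}^k Z_i$ with $J > 0$, where $Z_i$ is the Pauli $Z$ on qubit $i$. Suppose $(H',\mathcal{A})$ is an $(\eta,\epsilon)$-gadget for $H$, where $H'$ is a $k'$-local Hamiltonian with $k' < k$. Then, provided $\epsilon < 2^{-k'}J$, the gadget must satisfy $$\|H'\| \ge \frac{2^{-k'}J - \epsilon}{\eta} = \Omega(\eta^{-1}).$$
   Context: $\|\cdot\|$ is the operator norm. The ancillary space $\mathcal{A}$ is a tensor product of sites, and $H'$ being $k'$-local means $H'$ is a sum of terms each acting nontrivially on at most $k'$ sites among the $k$ qubits of $\mathcal{H}$ and the sites of $\mathcal{A}$. $(H',\mathcal{A})$ is an $(\eta,\epsilon)$-gadget for $H$ if there exist an orthogonal projector $P \ne 0$ on $\mathcal{A}$ and a unitary $U$ on $\mathcal{H}\otimes\mathcal{A}$ with $\|U - \mathbb{I}\| \le \eta$ and $\|P'H'P' - U(H\otimes P)U^\dagger\| \le \epsilon$, where $P' = U(\mathbb{I}\otimes P)U^\dagger$. *)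

From HB Require Import structures.
From mathcomp Require Import all_boot all_order all_algebra.
From mathcomp Require Import complex.
From mathcomp Require Import classical_sets reals.
Set Implicit Arguments. Unset Strict Implicit. Unset Printing Implicit Defensive.
Import Order.TTheory GRing.Theory Num.Theory.
Import ComplexField Normc.
Local Open Scope ring_scope.
Local Open Scope classical_set_scope.

Section QDefs.
Variable R : realType.
Local Notation C := (R[i]).

Definition site (k m : nat) : finType := ('I_k + 'I_m)%type.

(* Computational-basis configurations of H ⊗ A: a bit for each qubit
   (false = |0>, true = |1>) and a level in 'I_(d j) for ancilla site j. *)
Definition conf (k m : nat) (d : 'I_m -> nat) : finType :=
  ({ffun 'I_k -> bool} * {dffun forall j : 'I_m, 'I_(d j)})%type.

Definition op (T : finType) := T -> T -> C.
Definition vec (T : finType) := T -> C.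

Definition opmul (T : finType) (A B : op T) : op T :=
  fun x y => \sum_z A x z * B z y.
Definition opadd (T : finType) (A B : op T) : op T := fun x y => A x y + B x y.
Definition opsub (T : finType) (A B : op T) : op T := fun x y => A x y - B x y.
Definition opid (T : finType) : op T := fun x y => (x == y)%:R.
Definition adj (T : finType) (A : op T) : op T := fun x y => conjc (A y x).
Definition apply (T : finType) (A : op T) (v : vec T) : vec T :=
  fun x => \sum_y A x y * v y.

Definition vnorm (T : finType) (v : vec T) : R :=
  Num.sqrt (\sum_x normc (v x) ^+ 2).
Definition opnorm (T : finType) (A : op T) : R :=
  sup [set vnorm (apply A v) | v in [set v : vec T | vnorm v <= 1]].

Definition hermitian (T : finType) (A : op T) := forall x y, A x y = adj A x y.
Definition unitary (T : finType) (U : op T) :=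
  forall x y, opmul (adj U) U x y = opid x y /\ opmul U (adj U) x y = opid x y.
Definition orth_projector (T : finType) (P : op T) :=
  (forall x y, opmul P P x y = P x y) /\ hermitian P.
Definition nonzero_op (T : finType) (A : op T) := exists x y, A x y != 0.

Section Sites.
Variables (k m : nat) (d : 'I_m -> nat).
Local Notation cf := (conf k d).

Definition agree_at (s : site k m) (x y : cf) : bool :=
  match s with
  | inl i => x.1 i == y.1 i
  | inr j => x.2 j == y.2 j
  end.

(* A acts (nontrivially) only on the sites in S:  A = B_S ⊗ I_{S^c}. *)
Definition acts_on (S : {set site k m}) (A : op cf) : Prop :=
  exists B : op cf,
    (forall x x' y y', (forall s, s \in S -> agree_at s x x' && agree_at s y y') ->
        B x y = B x' y') /\
    (forall x y, A x y = if [forall s in ~: S, agree_at s x y] then B x y else 0).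

Definition klocal_hamiltonian (k' : nat) (H' : op cf) : Prop :=
  exists (n : nat) (S : 'I_n -> {set site k m}) (h : 'I_n -> op cf),
    (forall t, #|S t| <= k')%N /\ (forall t, acts_on (S t) (h t)) /\
    (forall t, hermitian (h t)) /\ (forall x y, H' x y = \sum_t h t x y).

Definition tensor (Hq : op {ffun 'I_k -> bool})
  (P : op {dffun forall j : 'I_m, 'I_(d j)}) : op cf :=
  fun x y => Hq x.1 y.1 * P x.2 y.2.

Definition gadget (eta eps : R) (H : op {ffun 'I_k -> bool}) (H' : op cf) : Prop :=
  exists (P : op {dffun forall j : 'I_m, 'I_(d j)}) (U : op cf),
    let P' := opmul U (opmul (tensor (@opid _) P) (adj U)) in
    [/\ orth_projector P, nonzero_op P, unitary U,
       opnorm (opsub U (@opid cf)) <= eta &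
       opnorm (opsub (opmul P' (opmul H' P'))
                     (opmul U (opmul (tensor H P) (adj U)))) <= eps].
End Sites.

(* H = J Z_1 ⊗ ... ⊗ Z_k, diagonal in the computational basis;
   Z|0> = |0>, Z|1> = -|1> (bit false = |0>). *)
Definition ZZstring (k : nat) (J : R) : op {ffun 'I_k -> bool} :=
  fun x y => (x == y)%:R * ((J%:C)%C * \prod_(i < k) (if x i then -1 else 1)).
End QDefs.

From Pilot Require Import Defs.
From HB Require Import structures.
From mathcomp Require Import all_boot all_order all_algebra.
From mathcomp Require Import complex.
From mathcomp Require Import classical_sets reals.
From mathcomp Require Import ring lra.
Import Order.TTheory GRing.Theory Num.Theory.
Import ComplexField Normc.
Set Implicit Arguments. Unset Strict Implicit. Unset Printing Implicit Defensive.
Local Open Scope ring_scope.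

(* Fix a unit vector [a] in the range of the ancilla projector P, and for every
   bit string b let w_b = |b> (x) a and z_b = U w_b.  The gadget condition says
   that <z_b, H' z_b> is within eps of J s(b), the eigenvalue of H on |b>, where
   s(b) = +-1 is the parity of b; and ||U - I|| <= eta moves each expectation by
   at most 2 eta ||H'||.  The signed average of <w_b, H' w_b> over all 2^k
   strings vanishes: every term of the k'-local H' misses some qubit i (k' < k),
   and flipping bit i negates s(b) while leaving the term's diagonal block
   unchanged.  Hence J <= eps + 2 eta ||H'||, which gives the bound for k' >= 1;
   for k' = 0, H' is a multiple of the identity and even J <= eps. *)

Section ComplexNorm.
Variable R : realType.
Local Notation C := R[i].

Lemma normc_ge0 (z : C) : 0 <= normc z.
Proof. exact: (@normr_ge0 _ (Rcomplex R)). Qed.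

Lemma normc_sum (I : finType) (F : I -> C) :
  normc (\sum_i F i) <= \sum_i normc (F i).
Proof. exact: (@ler_norm_sum _ (Rcomplex R)). Qed.

Lemma normc_conj (z : C) : normc (conjc z) = normc z.
Proof. by case: z => a b; rewrite /normc /= sqrrN. Qed.

Lemma normc_real (r : R) : normc r%:C%C = `|r|.
Proof. by rewrite /normc /= expr0n /= addr0 sqrtr_sqr. Qed.

Lemma normc_sqrC (z : C) : (normc z ^+ 2)%:C%C = z * conjc z.
Proof. by rewrite rmorphXn -sqr_normc. Qed.

Lemma sum_mul_le_sqrt (I : finType) (a b : I -> R) :
  \sum_i a i * b i <= Num.sqrt (\sum_i a i ^+ 2) * Num.sqrt (\sum_i b i ^+ 2).
Proof.
set A := \sum_i a i ^+ 2; set B := \sum_i b i ^+ 2; set S := \sum_i a i * b i.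
have lagrange_id : \sum_i \sum_j (a i * b j - a j * b i) ^+ 2 = 2 * (A * B - S ^+ 2).
  have AB : \sum_i \sum_j a i ^+ 2 * b j ^+ 2 = A * B.
    by rewrite /A /B mulr_suml; apply: eq_bigr => i _; rewrite mulr_sumr.
  have BA : \sum_i \sum_j a j ^+ 2 * b i ^+ 2 = A * B by rewrite exchange_big.
  have SS : \sum_i \sum_j a i * b i * (a j * b j) = S ^+ 2.
    by rewrite /S expr2 mulr_suml; apply: eq_bigr => i _; rewrite mulr_sumr.
  transitivity (\sum_i \sum_j a i ^+ 2 * b j ^+ 2 + \sum_i \sum_j a j ^+ 2 * b i ^+ 2
                - 2 * \sum_i \sum_j a i * b i * (a j * b j)); last by rewrite AB BA SS; ring.
  rewrite mulr_sumr -big_split -sumrB; apply: eq_bigr => i _.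
  by rewrite mulr_sumr -big_split -sumrB; apply: eq_bigr => j _ /=; ring.
have le_S2 : S ^+ 2 <= A * B.
  have : 0 <= \sum_i \sum_j (a i * b j - a j * b i) ^+ 2.
    by do 2!apply: sumr_ge0 => ? _; exact: sqr_ge0.
  by rewrite lagrange_id pmulr_rge0 // subr_ge0.
have A_ge0 : 0 <= A by apply: sumr_ge0 => i _; exact: sqr_ge0.
rewrite -sqrtrM // (le_trans (ler_norm S)) // -sqrtr_sqr ler_sqrt //.
by rewrite mulr_ge0 // sumr_ge0 // => i _; exact: sqr_ge0.
Qed.

Lemma sign_average_bound (I : finType) (s e f : I -> C) (J eps beta : R) :
  (0 < #|I|)%N -> (forall i, s i * s i = 1) ->
  (forall i, normc (e i - J%:C%C * s i) <= eps) ->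
  (forall i, normc (e i - f i) <= beta) ->
  \sum_i s i * f i = 0 -> J <= eps + beta.
Proof.
move=> I_gt0 s2 le_eps le_beta sf0.
have normc_s i : normc (s i) = 1.
  have : normc (s i) ^+ 2 = 1 ^+ 2 by rewrite expr2 -normcM s2 normc1 expr1n.
  by move/eqP; rewrite eqrXn2 ?normc_ge0 // => /eqP.
have sum_J : \sum_i s i * ((e i - f i) - (e i - J%:C%C * s i)) = (J *+ #|I|)%:C%C.
  transitivity (\sum_i (J%:C%C - s i * f i)).
    by apply: eq_bigr => i _; rewrite -[J%:C%C in RHS]mulr1 -(s2 i); ring.
  by rewrite sumrB sf0 subr0 sumr_const rmorphMn.
have : `|J| *+ #|I| <= (eps + beta) *+ #|I|.
  rewrite -normrMn -normc_real -sum_J -sumr_const.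
  apply: le_trans (normc_sum _) _; apply: ler_sum => i _.
  rewrite normcM normc_s mul1r addrC.
  by apply: le_trans (le_normcD _ _) _; rewrite normcN lerD.
by rewrite ler_pMn2r // => /(le_trans (ler_norm J)).
Qed.

End ComplexNorm.

Section FiniteHilbertSpace.
Variables (R : realType) (T : finType).
Local Notation C := R[i].
Local Notation vec := (vec R T).
Local Notation op := (op R T).

Definition dot (u v : vec) : C := \sum_x conjc (u x) * v x.

Definition expect (A : op) (v : vec) : C := dot v (apply A v).

Lemma vnorm_ge0 (v : vec) : 0 <= vnorm v.
Proof. exact: sqrtr_ge0. Qed.

Lemma sqr_vnorm (v : vec) : vnorm v ^+ 2 = \sum_x normc (v x) ^+ 2.
Proof. by rewrite sqr_sqrtr // sumr_ge0 // => x _; rewrite sqr_ge0. Qed.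

Lemma dotvv (v : vec) : dot v v = (vnorm v ^+ 2)%:C%C.
Proof.
by rewrite sqr_vnorm rmorph_sum; apply: eq_bigr => x _ /=; rewrite normc_sqrC mulrC.
Qed.

Lemma normc_le_vnorm (v : vec) x : normc (v x) <= vnorm v.
Proof.
rewrite -[normc _]ger0_norm ?normc_ge0 // -sqrtr_sqr ler_sqrt ?sumr_ge0 //.
  by rewrite (bigD1 x) //= lerDl sumr_ge0 // => y _; exact: sqr_ge0.
by move=> y _; exact: sqr_ge0.
Qed.

Lemma normc_dot_le (u v : vec) : normc (dot u v) <= vnorm u * vnorm v.
Proof.
apply: le_trans (normc_sum _) _.
under eq_bigr do rewrite normcM normc_conj.
exact: sum_mul_le_sqrt.
Qed.

Lemma apply_opmul (A B : op) v : apply (opmul A B) v = apply A (apply B v).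
Proof.
apply: boolp.funext => x; rewrite /apply /opmul.
under eq_bigr do rewrite mulr_suml.
rewrite exchange_big; apply: eq_bigr => z _; rewrite mulr_sumr.
by apply: eq_bigr => y _; rewrite mulrA.
Qed.

Lemma sum_delta (a : T) (F : T -> C) : \sum_y (a == y)%:R * F y = F a.
Proof.
rewrite (bigD1 a) //= eqxx mul1r big1 ?addr0 // => y ya.
by rewrite eq_sym (negbTE ya) mul0r.
Qed.

Lemma apply_opid (v : vec) : apply (@opid R T) v = v.
Proof. by apply: boolp.funext => x; rewrite /apply /opid sum_delta. Qed.

Lemma apply_opsub (A B : op) v :
  apply (opsub A B) v = fun x => apply A v x - apply B v x.
Proof.
by apply: boolp.funext => x; rewrite /apply -sumrB; apply: eq_bigr => y _; rewrite mulrBl.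
Qed.

Lemma applyB (A : op) (u v : vec) :
  apply A (fun x => u x - v x) = fun x => apply A u x - apply A v x.
Proof.
by apply: boolp.funext => x; rewrite /apply -sumrB; apply: eq_bigr => y _; rewrite mulrBr.
Qed.

Lemma dotBl (u u' v : vec) : dot (fun x => u x - u' x) v = dot u v - dot u' v.
Proof. by rewrite /dot -sumrB; apply: eq_bigr => x _; rewrite rmorphB mulrBl. Qed.

Lemma dotBr (u v v' : vec) : dot u (fun x => v x - v' x) = dot u v - dot u v'.
Proof. by rewrite /dot -sumrB; apply: eq_bigr => x _; rewrite mulrBr. Qed.

Lemma dotZr (u v : vec) c : dot u (fun x => c * v x) = c * dot u v.
Proof. by rewrite /dot mulr_sumr; apply: eq_bigr => x _; rewrite mulrCA. Qed.

Lemma dot_adj (A : op) u v : dot u (apply A v) = dot (apply (adj A) u) v.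
Proof.
rewrite /dot /apply.
under eq_bigr do rewrite mulr_sumr.
under [RHS]eq_bigr do rewrite rmorph_sum mulr_suml.
rewrite exchange_big; apply: eq_bigr => y _; apply: eq_bigr => x _.
by rewrite /adj rmorphM /= conjcK mulrCA mulrA.
Qed.

Lemma adjK (A : op) : adj (adj A) = A.
Proof. by apply: boolp.funext => x; apply: boolp.funext => y; rewrite /adj /= conjcK. Qed.

Lemma adj_opid : adj (@opid R T) = @opid R T.
Proof.
apply: boolp.funext => x; apply: boolp.funext => y.
by rewrite /adj /opid /= rmorph_nat eq_sym.
Qed.

Lemma hermitian_adj (A : op) : Defs.hermitian A -> adj A = A.
Proof. by move=> hA; apply: boolp.funext => x; apply: boolp.funext => y; rewrite -hA. Qed.

Lemma applyZ (A : op) (v : vec) c :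
  apply A (fun x => c * v x) = fun x => c * apply A v x.
Proof.
by apply: boolp.funext => x; rewrite /apply mulr_sumr; apply: eq_bigr => y _; rewrite mulrCA.
Qed.

Lemma vnormZ (v : vec) c : vnorm (fun x => c * v x) = normc c * vnorm v.
Proof.
rewrite /vnorm; under eq_bigr do rewrite normcM exprMn.
by rewrite -mulr_sumr sqrtrM ?sqr_ge0 // sqrtr_sqr ger0_norm ?normc_ge0.
Qed.

Lemma vnorm0 : vnorm (fun _ : T => 0 : C) = 0.
Proof. by rewrite /vnorm big1 ?sqrtr0 // => x _; rewrite normc0 expr0n. Qed.

Lemma opnorm_has_sup (A : op) :
  has_sup [set vnorm (apply A v) | v in [set v : vec | vnorm v <= 1]].
Proof.
split; first by exists (vnorm (apply A (fun=> 0))), (fun=> 0); rewrite //= vnorm0.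
exists (Num.sqrt (\sum_x (\sum_y normc (A x y)) ^+ 2)) => _ [v /= v1 <-].
rewrite ler_sqrt; last by apply: sumr_ge0 => x _; exact: sqr_ge0.
apply: ler_sum => x _; rewrite ler_sqr ?nnegrE ?normc_ge0 ?sumr_ge0 // => [|y _]; last first.
  exact: normc_ge0.
apply: le_trans (normc_sum _) _; apply: ler_sum => y _.
by rewrite normcM ler_piMr ?normc_ge0 // (le_trans (normc_le_vnorm v y) v1).
Qed.

Lemma vnorm_apply_le_opnorm (A : op) v : vnorm v <= 1 -> vnorm (apply A v) <= opnorm A.
Proof. by move=> v1; apply: (sup_upper_bound (opnorm_has_sup A)); exists v. Qed.

Lemma opnorm_ge0 (A : op) : 0 <= opnorm A.
Proof.
apply: le_trans (vnorm_apply_le_opnorm A (v := fun=> 0) _); first exact: vnorm_ge0.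
by rewrite vnorm0.
Qed.

Lemma expect_sum (I : finType) (h : I -> op) (A : op) v :
  (forall x y, A x y = \sum_t h t x y) -> expect A v = \sum_t expect (h t) v.
Proof.
move=> hA; rewrite /expect /dot /apply exchange_big; apply: eq_bigr => x _.
rewrite -mulr_sumr exchange_big; congr (_ * _); apply: eq_bigr => y _.
by rewrite hA mulr_suml.
Qed.

Lemma expect_scalar (A : op) c v :
  (forall x y, A x y = (x == y)%:R * c) -> expect A v = c * dot v v.
Proof.
move=> hA; rewrite /expect -dotZr; congr dot; apply: boolp.funext => x.
by rewrite /apply; under eq_bigr do rewrite hA -mulrA; exact: sum_delta.
Qed.

Lemma expect_sub_le (A : op) (z w : vec) :
  Defs.hermitian A -> vnorm z <= 1 -> vnorm w <= 1 ->
  normc (expect A z - expect A w) <= 2 * vnorm (fun x => z x - w x) * opnorm A.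
Proof.
move=> hA z1 w1; set e := fun x => z x - w x.
have -> : expect A z - expect A w = dot e (apply A z) + dot (apply (adj A) w) e.
  by rewrite -dot_adj /expect /e dotBl applyB dotBr addrA subrK.
apply: le_trans (le_normcD _ _) _.
rewrite -mulrA mulr_natl mulr2n; apply: lerD.
  apply: le_trans (normc_dot_le _ _) _.
  by rewrite ler_wpM2l ?vnorm_ge0 ?vnorm_apply_le_opnorm.
rewrite hermitian_adj //; apply: le_trans (normc_dot_le _ _) _.
by rewrite mulrC ler_wpM2l ?vnorm_ge0 ?vnorm_apply_le_opnorm.
Qed.

Lemma projector_unit_fixed (P : op) : orth_projector P -> nonzero_op P ->
  exists a : vec, apply P a = a /\ vnorm a = 1.
Proof.
move=> [PP _] [x [y Pxy]]; pose c : vec := P^~ y.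
have Pc : apply P c = c by apply: boolp.funext => z; rewrite /apply /c -(PP z y).
have c_gt0 : 0 < vnorm c.
  apply: lt_le_trans (normc_le_vnorm c x).
  by rewrite lt_def normc_ge0 andbT; apply: contra Pxy => /eqP/eq0_normc; rewrite /c => ->.
exists (fun z => ((vnorm c)^-1)%:C%C * c z); split; first by rewrite applyZ Pc.
by rewrite vnormZ normc_real ger0_norm ?invr_ge0 ?ltW // mulVf ?gt_eqF.
Qed.

Section Unitary.
Variables (U : op) (hU : unitary U).

Lemma unitary_adjK v : apply (adj U) (apply U v) = v.
Proof.
rewrite -apply_opmul (_ : opmul (adj U) U = @opid R T) ?apply_opid //.
by apply: boolp.funext => x; apply: boolp.funext => y; case: (hU x y).
Qed.

Lemma unitary_dot u v : dot (apply U u) (apply U v) = dot u v.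
Proof. by rewrite dot_adj unitary_adjK. Qed.

Lemma unitary_vnorm v : vnorm (apply U v) = vnorm v.
Proof.
rewrite /vnorm; congr Num.sqrt; apply: (@complexI R).
by rewrite -!sqr_vnorm -!dotvv unitary_dot.
Qed.

Lemma expect_unitary_sub_le (A : op) (eta : R) v :
  Defs.hermitian A -> opnorm (opsub U (@opid R T)) <= eta -> vnorm v <= 1 ->
  normc (expect A (apply U v) - expect A v) <= 2 * eta * opnorm A.
Proof.
move=> hA hUeta v1; have Uv1 : vnorm (apply U v) <= 1 by rewrite unitary_vnorm.
apply: le_trans (expect_sub_le hA Uv1 v1) _.
rewrite ler_wpM2r ?opnorm_ge0 // ler_wpM2l // (le_trans _ hUeta) //.
have <- : apply (opsub U (@opid R T)) v = fun x => apply U v x - v x.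
  by rewrite apply_opsub apply_opid.
exact: vnorm_apply_le_opnorm.
Qed.

End Unitary.

End FiniteHilbertSpace.

Section QubitsAndAncilla.
Variables (R : realType) (k m : nat) (d : 'I_m -> nat).
Local Notation C := R[i].
Local Notation cf := (conf k d).
Local Notation bits := {ffun 'I_k -> bool}.
Local Notation anc := {dffun forall j : 'I_m, 'I_(d j)}.

Lemma sum_conf (V : nmodType) (F : cf -> V) :
  \sum_x F x = \sum_(b : bits) \sum_(y : anc) F (b, y).
Proof. by rewrite pair_big; apply: eq_bigr => -[]. Qed.

Lemma adj_tensor (Hq : op R bits) (P : op R anc) :
  adj (tensor Hq P) = tensor (adj Hq) (adj P).
Proof. by apply: boolp.funext => x; apply: boolp.funext => y; rewrite /adj rmorphM. Qed.

Definition ket (b : bits) (a : vec R anc) : vec R cf := fun x => (b == x.1)%:R * a x.2.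

Lemma vnorm_ket b a : vnorm (ket b a) = vnorm a.
Proof.
rewrite /vnorm sum_conf (bigD1 b) //= [X in _ + X]big1 ?addr0 => [|b' b'b].
  by congr Num.sqrt; apply: eq_bigr => y _; rewrite /ket /= eqxx mul1r.
by apply: big1 => y _; rewrite /ket /= eq_sym (negbTE b'b) mul0r normc0 expr0n.
Qed.

Lemma apply_tensor_ket (Hq : op R bits) (P : op R anc) b a : apply P a = a ->
  apply (tensor Hq P) (ket b a) = fun x => Hq x.1 b * a x.2.
Proof.
move=> Pa; apply: boolp.funext => x; rewrite {1}/apply sum_conf.
transitivity (\sum_b' (b == b')%:R * (Hq x.1 b' * apply P a x.2)).
  apply: eq_bigr => b' _; rewrite /apply !mulr_sumr; apply: eq_bigr => y _.
  by rewrite /tensor /ket /=; ring.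
by rewrite sum_delta Pa.
Qed.

Lemma expect_ket (A : op R cf) b a :
  expect A (ket b a) = \sum_y \sum_y' conjc (a y) * A (b, y) (b, y') * a y'.
Proof.
rewrite /expect /dot sum_conf.
transitivity (\sum_b' (b == b')%:R * \sum_y conjc (a y) * apply A (ket b a) (b', y)).
  apply: eq_bigr => b' _; rewrite mulr_sumr; apply: eq_bigr => y _.
  by rewrite /ket /= rmorphM rmorph_nat /=; ring.
rewrite sum_delta; apply: eq_bigr => y _; rewrite /apply sum_conf mulr_sumr.
transitivity (\sum_b' (b == b')%:R * \sum_y' conjc (a y) * A (b, y) (b', y') * a y').
  apply: eq_bigr => b' _; rewrite !mulr_sumr; apply: eq_bigr => y' _.
  by rewrite /ket /=; ring.
by rewrite sum_delta.
Qed.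

Definition zsign (b : bits) : C := \prod_(i < k) (if b i then -1 else 1).

Lemma zsign_sqr b : zsign b * zsign b = 1.
Proof.
rewrite -big_split /=; apply: big1 => i _.
by case: (b i); rewrite ?mulrNN mulr1.
Qed.

Definition flip (i : 'I_k) (b : bits) : bits :=
  [ffun j => if j == i then ~~ b j else b j].

Lemma flipK i : involutive (flip i).
Proof. by move=> b; apply/ffunP => j; rewrite !ffunE; case: (j == i); rewrite ?negbK. Qed.

Lemma zsign_flip i b : zsign (flip i b) = - zsign b.
Proof.
rewrite /zsign (bigD1 i) //= [in RHS](bigD1 i) //= ffunE eqxx.
under eq_bigr => j ji do rewrite ffunE (negbTE ji).
by case: (b i); rewrite /= ?mulN1r ?mul1r ?opprK.
Qed.

Lemma zsign_sum_expect_eq0 (A : op R cf) i a :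
  (forall b y y', A (flip i b, y) (flip i b, y') = A (b, y) (b, y')) ->
  \sum_b zsign b * expect A (ket b a) = 0.
Proof.
move=> flipA; set S := \sum_b _.
have SN : S = - S.
  rewrite {1}/S (reindex_inj (can_inj (flipK i))) -sumrN; apply: eq_bigr => b _.
  rewrite zsign_flip mulNr !expect_ket.
  by under eq_bigr do under eq_bigr do rewrite flipA.
have : S *+ 2 = 0 by rewrite mulr2n {1}SN addNr.
by move/eqP; rewrite mulrn_eq0 => /eqP.
Qed.

Lemma agree_everywhere (x y : cf) :
  [forall s in ~: finset.set0, agree_at s x y] = (x == y).
Proof.
apply/forall_inP/eqP => [agree | -> [i|j] _ /=]; rewrite ?eqxx //.
have inC (s : site k m) : s \in ~: finset.set0 by rewrite finset.in_setC finset.in_set0.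
case: x y agree => [x1 x2] [y1 y2] agree; congr pair.
  by apply/ffunP => i; apply/eqP; exact: agree (inl i) (inC _).
by apply/ffunP => j; apply/eqP; exact: agree (inr j) (inC _).
Qed.

Lemma acts_on_set0 (A : op R cf) : acts_on finset.set0 A ->
  forall x0 x y, A x y = (x == y)%:R * A x0 x0.
Proof.
case=> B [constB defA] x0 x y; rewrite !defA !agree_everywhere eqxx.
rewrite (constB x x0 y x0) => [|s]; last by rewrite finset.in_set0.
by case: eqP; rewrite ?mul1r ?mul0r.
Qed.

Lemma acts_on_flip (S : {set site k m}) (A : op R cf) i :
  acts_on S A -> inl i \notin S ->
  forall b y y', A (flip i b, y) (flip i b, y') = A (b, y) (b, y').
Proof.
case=> B [constB defA] iS b y y'; rewrite !defA.
have -> : [forall s in ~: S, agree_at s (flip i b, y) (flip i b, y')] =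
          [forall s in ~: S, agree_at s (b, y) (b, y')].
  by apply: eq_forallb => -[j|j] /=; rewrite ?eqxx.
rewrite (constB _ (b, y) _ (b, y')) // => -[j|j] jS /=; rewrite ?eqxx //.
have ji : j != i by apply: contraNneq iS => <-.
by rewrite ffunE (negbTE ji) eqxx.
Qed.

Lemma exists_free_qubit (S : {set site k m}) : (#|S| < k)%N ->
  exists i, inl i \notin S.
Proof.
move=> ltSk; apply/existsP; apply: contraTT ltSk; rewrite negb_exists => /forallP inS.
rewrite -leqNgt -{1}(card_ord k) -(@card_imset _ (site k m) inl _ inl_inj).
rewrite subset_leq_card //.
by apply/fintype.subsetP => _ /finset.imsetP[i _ ->]; rewrite -[_ \in _]negbK inS.
Qed.

Section LocalHamiltonian.
Variables (k' : nat) (H' : op R cf) (locH' : klocal_hamiltonian k' H').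

Lemma klocal_hermitian : Defs.hermitian H'.
Proof.
case: locH' => n [S [h [_ [_ [herm_h sumH]]]]] x y.
rewrite /adj !sumH rmorph_sum; apply: eq_bigr => t _.
by rewrite (herm_h t x y).
Qed.

Lemma klocal_zsign_sum_eq0 a : (k' < k)%N ->
  \sum_b zsign b * expect H' (ket b a) = 0.
Proof.
case: locH' => n [S [h [cardS [acts [_ sumH]]]]] lt_k'k.
under eq_bigr do rewrite (expect_sum _ sumH) mulr_sumr.
rewrite exchange_big big1 // => t _.
have [i iS] := exists_free_qubit (leq_ltn_trans (cardS t) lt_k'k).
exact: zsign_sum_expect_eq0 (acts_on_flip (acts t) iS).
Qed.

Lemma klocal0_scalar : k' = 0%N -> exists c, forall x y, H' x y = (x == y)%:R * c.
Proof.
move=> k'0; case: (pickP (fun _ : cf => true)) => [x0 _|cf0]; last first.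
  by exists 0 => x; have := cf0 x.
exists (H' x0 x0) => x y; case: locH' => n [S [h [cardS [acts [_ sumH]]]]].
rewrite !sumH mulr_sumr; apply: eq_bigr => t _; apply: acts_on_set0.
by have := cardS t; rewrite k'0 leqn0 cards_eq0 => /eqP <-.
Qed.

End LocalHamiltonian.

Lemma gadget_ZZ_states (eta eps J : R) (H' : op R cf) :
  gadget eta eps (ZZstring J) H' ->
  exists (a : vec R anc) (U : op R cf),
    [/\ vnorm a = 1, unitary U, opnorm (opsub U (@opid R cf)) <= eta &
        forall b, normc (expect H' (apply U (ket b a)) - J%:C%C * zsign b) <= eps].
Proof.
move=> [P [U]] /= [projP nzP unitU leUeta leDeps].
have [a [Pa a1]] := projector_unit_fixed projP nzP.
exists a, U; split => // b; set w := ket b a; set z := apply U w.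
set D := opsub _ _ in leDeps.
have z1 : vnorm z = 1 by rewrite unitary_vnorm // vnorm_ket.
have Qw : apply (tensor (@opid R bits) P) w = w.
  by rewrite apply_tensor_ket //; apply: boolp.funext => x; rewrite /opid eq_sym.
have Qadj : adj (tensor (@opid R bits) P) = tensor (@opid R bits) P.
  by rewrite adj_tensor adj_opid hermitian_adj //; case: projP.
have Tw : apply (tensor (ZZstring J) P) w = fun x => J%:C%C * zsign b * w x.
  rewrite apply_tensor_ket //; apply: boolp.funext => x; rewrite /ZZstring /w /ket.
  case: eqP => [->|/eqP]; rewrite ?eqxx ?mul1r // eq_sym => /negbTE ->.
  by rewrite !mul0r mulr0.
(* P' = U (I (x) P) U^dag fixes z, and U (H (x) P) U^dag z = J zsign(b) z. *)
have -> : expect H' z - J%:C%C * zsign b = dot z (apply D z).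
  rewrite apply_opsub dotBr !apply_opmul unitary_adjK // Qw Tw !unitary_dot // dotZr.
  by rewrite dot_adj Qadj Qw dot_adj adjK dotvv vnorm_ket a1 expr1n mulr1.
apply: le_trans (normc_dot_le _ _) _.
by rewrite z1 mul1r (le_trans _ leDeps) // vnorm_apply_le_opnorm // z1.
Qed.

End QubitsAndAncilla.

Lemma ZZ_gadget_energy_bounds (R : realType) (k k' m : nat) (d : 'I_m -> nat)
    (J eta eps : R) (H' : op R (conf k d)) :
  (k' < k)%N -> klocal_hamiltonian k' H' -> gadget eta eps (ZZstring J) H' ->
  [/\ 0 <= eta, 0 <= eps, J <= eps + 2 * eta * opnorm H' & (k' = 0%N -> J <= eps)].
Proof.
move=> lt_k'k locH' /gadget_ZZ_states[a [U [a1 unitU leUeta le_eps]]].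
have bound beta :
    (forall b, normc (expect H' (apply U (ket b a)) - expect H' (ket b a)) <= beta) ->
    J <= eps + beta.
  move=> le_beta; apply: sign_average_bound le_eps le_beta _.
  - by rewrite card_ffun card_bool card_ord expn_gt0.
  - exact: zsign_sqr.
  - exact: klocal_zsign_sum_eq0 locH' a lt_k'k.
split.
- exact: le_trans (opnorm_ge0 _) leUeta.
- exact: le_trans (normc_ge0 _) (le_eps [ffun=> false]).
- apply: bound => b; apply: expect_unitary_sub_le => //.
    exact: klocal_hermitian locH'.
  by rewrite vnorm_ket a1.
- move=> k'0; rewrite -[eps]addr0; apply: bound => b.
  have [c scalarH'] := klocal0_scalar locH' k'0.
  by rewrite !(expect_scalar _ scalarH') unitary_dot // subrr normc0.
Qed.

Unset Implicit Arguments.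

Theorem theorem3p3 (R : realType) (k k' m : nat) (d : 'I_m -> nat)
    (J eta eps : R) (H' : op R (conf k d)) :
  0 < J ->
  (k' < k)%N ->
  klocal_hamiltonian k' H' ->
  gadget eta eps (ZZstring J) H' ->
  eps < J / 2 ^+ k' ->
  (J / 2 ^+ k' - eps) / eta <= opnorm H'.
Proof.
(* The hypothesis eps < J / 2 ^+ k' only makes the bound nontrivial; for eta = 0
   the left-hand side is 0, as x / 0 = 0. *)
move=> J_gt0 lt_k'k locH' gadH' _.
have [eta_ge0 eps_ge0 le_J le_J0] := ZZ_gadget_energy_bounds lt_k'k locH' gadH'.
have N_ge0 := opnorm_ge0 H'.
have [->|eta_neq0] := eqVneq eta 0; first by rewrite invr0 mulr0.
rewrite ler_pdivrMr ?lt_def ?eta_neq0 //.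
case: k' lt_k'k locH' le_J0 => [|k''] _ _ le_J0.
  have := le_J0 erefl; rewrite expr0 divr1 => le_J_eps.
  by rewrite (le_trans _ (mulr_ge0 N_ge0 eta_ge0)) // subr_le0.
have : J / 2 ^+ k''.+1 <= J / 2.
  by rewrite ler_pM2l // lef_pV2 ?posrE ?exprn_gt0 // exprS ler_pMr // exprn_ege1 // ler1n.
lra.
Qed.
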